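(* Let Assumption (A) hold and let $\xi$ and $\eta_h$ be as in the context. There is $q_W=q_W(K,d,M_4)>0$ such that for all $0<h\le1$ and $x\in\mathbb R^k$, $\mathbb E\,W(x+\eta_h(x))\le e^{q_Wh}W(x)$; consequently $\|U_hg\|_W\le e^{q_Wh}\|g\|_W$ for every continuous $g$ with $\|g\|_W<\infty$.
   Context: $b=\sigma_0,\dots,\sigma_d:\mathbb R^k\to\mathbb R^k$. Assumption (A): there are $K>0$, integer $m_0\ge4$, $\theta\in(0,1)$ with, for $j=0..d$: $|\sigma_j(x)|\le K(1+|x|)$, $|\sigma_j(x)-\sigma_j(x')|\le K|x-x'|$, $\sigma_j\in C^{m_0}$, $D^{m_0}\sigma_j$ globally $\theta$-Hölder, operator norms $\|D^i\sigma_j\|\le K$, $1\le i\le m_0$. $\xi$ is an $\mathbb R^d$-valued random vector with $\mathbb E\xi=0$, $\mathbb E\xi_i\xi_j=\delta_{ij}$, $M_4:=\mathbb E|\xi|^4<\infty$, vanishing third moments. $\eta_h(x)=hb(x)+\sqrt h\sum_{j=1}^d\sigma_j(x)\xi_j$, $U_hg(x)=\mathbb E g(x+\eta_h(x))$. $W(x)=1+|x|^4$, $\|g\|_W=\sup_x|g(x)|/W(x)$. *)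

From HB Require Import structures.
From mathcomp Require Import all_boot all_order all_algebra.
From mathcomp Require Import all_classical all_reals all_analysis.
Set Implicit Arguments. Unset Strict Implicit. Unset Printing Implicit Defensive.
Import Order.TTheory GRing.Theory Num.Theory.
Import numFieldNormedType.Exports.
Local Open Scope classical_set_scope.
Local Open Scope ring_scope.

Section Defs.
Context {R : realType}.

Definition enorm (k : nat) (x : 'rV[R]_k) : R :=
  Num.sqrt (\sum_(i < k) x ord0 i ^+ 2).

Definition W (k : nat) (x : 'rV[R]_k) : R := 1 + enorm x ^+ 4.

(* Iterated directional derivative: dder [:: v1; ...; vi] f x = D^i f(x)[v1,...,vi]. *)
Definition dder (k : nat) (vs : seq 'rV[R]_k) (f : 'rV[R]_k -> 'rV[R]_k)
  : 'rV[R]_k -> 'rV[R]_k :=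
  foldr (fun v g => fun x => 'D_v g x) f vs.

Definition coeffA (k : nat) (K : R) (m0 : nat) (theta : R)
  (f : 'rV[R]_k -> 'rV[R]_k) : Prop :=
  [/\ (forall x, enorm (f x) <= K * (1 + enorm x)),
      (forall x x', enorm (f x - f x') <= K * enorm (x - x')),
      (
      (* f is C^m0: the derivatives of order < m0 are (Frechet) differentiable
         and all derivatives of order <= m0 are continuous *)
      (forall vs, (size vs < m0)%N -> forall x, differentiable (dder vs f) x) /\
      (forall vs, (size vs <= m0)%N -> continuous (dder vs f))),
      (* operator norms ||D^i f(x)|| <= K for 1 <= i <= m0 *)
      (forall vs, (1 <= size vs <= m0)%N -> forall x,
          enorm (dder vs f x) <= K * \prod_(v <- vs) enorm v) &
      (* D^m0 f is globally theta-Hoelder (in operator norm) *)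
      (exists C : R, forall vs, size vs = m0 -> forall x x',
          enorm (dder vs f x - dder vs f x')
            <= C * (enorm (x - x') `^ theta) * \prod_(v <- vs) enorm v)].

Definition assumptionA (k d : nat) (K : R) (m0 : nat) (theta : R)
  (sigma : 'I_d.+1 -> 'rV[R]_k -> 'rV[R]_k) : Prop :=
  [/\ 0 < K, (4 <= m0)%N, 0 < theta < 1 & forall j, coeffA K m0 theta (sigma j)].

(* eta_h(x) = h b(x) + sqrt h sum_{j=1}^d sigma_j(x) xi_j, with b = sigma_0;
   xi is indexed by 'I_d, xi j corresponding to sigma (lift ord0 j). *)
Definition etah (k d : nat) (sigma : 'I_d.+1 -> 'rV[R]_k -> 'rV[R]_k)
  (T : Type) (xi : 'I_d -> T -> R) (h : R) (x : 'rV[R]_k) (t : T) : 'rV[R]_k :=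
  h *: sigma ord0 x + Num.sqrt h *: \sum_(j < d) xi j t *: sigma (lift ord0 j) x.

Definition U (dT : measure_display) (T : measurableType dT) (P : probability T R)
  (k d : nat) (sigma : 'I_d.+1 -> 'rV[R]_k -> 'rV[R]_k) (xi : 'I_d -> T -> R)
  (h : R) (g : 'rV[R]_k -> R) (x : 'rV[R]_k) : R :=
  Rintegral P setT (fun t => g (x + etah sigma xi h x t)).

Definition Wnorm (k : nat) (g : 'rV[R]_k -> R) : \bar R :=
  ereal_sup (range (fun x => (`|g x| / W x)%:E)).

End Defs.

From HB Require Import structures.
From mathcomp Require Import all_boot all_order all_algebra.
From mathcomp Require Import all_classical all_reals all_analysis.
From mathcomp Require Import ring lra measurable_realfun.
Import Order.TTheory GRing.Theory Num.Theory.
Import numFieldNormedType.Exports.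
Set Implicit Arguments. Unset Strict Implicit. Unset Printing Implicit Defensive.
Local Open Scope ring_scope.

(** Write [x + eta_h(x) = x + h b + sqrt h S] with [S = sum_j xi_j sigma_j(x)].
   Then [|x + eta_h(x)|^2 = |x|^2 + 2 sqrt h <x, S> + r] with [|r| <= h B] for
   [B = |x|^2 + 3 |b|^2 + 2 |S|^2], and squaring gives
   [|x + eta_h(x)|^4 <= |x|^4 + 4 sqrt h |x|^2 <x, S> + 6 h B^2].
   The middle term is linear in [xi], hence has mean zero, while linear growth
   of the [sigma_j] and Cauchy-Schwarz give [B^2 <= 2 c^2 (1 + |x|)^4 (1 + |xi|^4)].
   So [E W(x + eta_h(x)) <= (1 + q h) W(x) <= e^(q h) W(x)]; only [E xi = 0] and
   [E |xi|^4 = M4] are used.  The bound on [U_h] integrates [|g| <= ||g||_W W]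
   against the same dominating function. *)

Section real_inequalities.
Context {R : realType}.

Lemma CauchySchwarz_sum n (u v : 'I_n -> R) :
  (\sum_(i < n) u i * v i) ^+ 2 <= (\sum_(i < n) u i ^+ 2) * \sum_(i < n) v i ^+ 2.
Proof.
have lagrange : \sum_(i < n) \sum_(j < n) (u i * v j - u j * v i) ^+ 2
    = 2 * ((\sum_i u i ^+ 2) * (\sum_i v i ^+ 2) - (\sum_i u i * v i) ^+ 2).
  have pt i j : (u i * v j - u j * v i) ^+ 2
      = u i ^+ 2 * v j ^+ 2 + u j ^+ 2 * v i ^+ 2 - (u i * v i * (u j * v j)) *+ 2.
    by ring.
  under eq_bigr do under eq_bigr do rewrite pt.
  have E1 : (\sum_i u i ^+ 2) * (\sum_i v i ^+ 2) = \sum_i \sum_j u i ^+ 2 * v j ^+ 2.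
    by rewrite mulr_suml; apply: eq_bigr => i _; rewrite mulr_sumr.
  have E2 : (\sum_i u i * v i) ^+ 2 = \sum_i \sum_j u i * v i * (u j * v j).
    by rewrite expr2 mulr_suml; apply: eq_bigr => i _; rewrite mulr_sumr.
  have E3 : \sum_(i < n) \sum_(j < n) u j ^+ 2 * v i ^+ 2
           = \sum_i \sum_j u i ^+ 2 * v j ^+ 2.
    by rewrite exchange_big.
  under eq_bigr do rewrite sumrB big_split sumrMnl /=.
  rewrite sumrB big_split sumrMnl /= E1 E2 E3; ring.
have : 0 <= \sum_(i < n) \sum_(j < n) (u i * v j - u j * v i) ^+ 2.
  by do 2 (apply: sumr_ge0 => ? _); exact: sqr_ge0.
rewrite lagrange; lra.
Qed.

Lemma sqr_perturb_le (s A B p r : R) :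
  0 <= s <= 1 -> 0 <= A <= B -> 2 * `|p| <= B -> `|r| <= s ^+ 2 * B ->
  (A + 2 * s * p + r) ^+ 2 <= A ^+ 2 + 4 * s * A * p + 6 * s ^+ 2 * B ^+ 2.
Proof.
move=> /andP[s0 s1] /andP[A0 AB] pB rB.
have B0 : 0 <= B by lra.
have /ler_normlP[pB1 pB2] : `|2 * p| <= B by rewrite normrM ger0_norm.
move/ler_normlP: rB => [rB1 rB2].
have sB : s ^+ 2 * B <= s * B by rewrite expr2 -mulrA ler_piMl // mulr_ge0.
have v2 : (2 * s * p + r) ^+ 2 <= (2 * s * B) ^+ 2.
  rewrite -subr_ge0 subr_sqr; apply: mulr_ge0; nra.
have Ar : 2 * A * r <= 2 * s ^+ 2 * B ^+ 2 by nra.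
nra.
Qed.

Lemma expr4_1D_le (a : R) : (1 + a) ^+ 4 <= 8 * (1 + a ^+ 4).
Proof.
have -> : (1 + a) ^+ 4 = ((1 + a) ^+ 2) ^+ 2 by rewrite -exprM.
have -> : a ^+ 4 = (a ^+ 2) ^+ 2 by rewrite -exprM.
have := sqr_ge0 (a - 1); have := sqr_ge0 (a ^+ 2 - 1); nra.
Qed.

Lemma normr_le_1Dsqr_sqr (a : R) : `|a| <= 1 + (a ^+ 2) ^+ 2.
Proof.
have := sqr_ge0 (`|a| - 1); have := sqr_ge0 (a ^+ 2 - 1); have := normr_ge0 a.
rewrite -(real_normK (num_real a)); nra.
Qed.

End real_inequalities.

Section euclidean_rows.
Context {R : realType} {k : nat}.
Implicit Types (u v x b S : 'rV[R]_k) (c s : R).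

Definition dotv u v : R := \sum_(i < k) u ord0 i * v ord0 i.

Lemma enorm_ge0 u : 0 <= enorm u.
Proof. exact: sqrtr_ge0. Qed.

Lemma enorm_sqr u : enorm u ^+ 2 = dotv u u.
Proof. by rewrite sqr_sqrtr // sumr_ge0 // => i _; rewrite sqr_ge0. Qed.

Lemma dotvDr u v x : dotv u (v + x) = dotv u v + dotv u x.
Proof. by rewrite /dotv -big_split; apply: eq_bigr => i _; rewrite mxE mulrDr. Qed.

Lemma dotvZr c u v : dotv u (c *: v) = c * dotv u v.
Proof. by rewrite /dotv mulr_sumr; apply: eq_bigr => i _; rewrite mxE mulrCA. Qed.

Lemma dotv_sumr n u (F : 'I_n -> 'rV[R]_k) :
  dotv u (\sum_(j < n) F j) = \sum_(j < n) dotv u (F j).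
Proof.
by rewrite /dotv exchange_big; apply: eq_bigr => i _; rewrite summxE mulr_sumr.
Qed.

Lemma enorm_sqrD u v : enorm (u + v) ^+ 2 = enorm u ^+ 2 + 2 * dotv u v + enorm v ^+ 2.
Proof.
rewrite !enorm_sqr /dotv mulr_sumr -!big_split /=; apply: eq_bigr => i _.
by rewrite mxE; ring.
Qed.

Lemma enorm_sqrZ c u : enorm (c *: u) ^+ 2 = c ^+ 2 * enorm u ^+ 2.
Proof.
by rewrite !enorm_sqr /dotv mulr_sumr; apply: eq_bigr => i _; rewrite mxE; ring.
Qed.

Lemma normr_dotv_le u v : 2 * `|dotv u v| <= enorm u ^+ 2 + enorm v ^+ 2.
Proof.
have cs : dotv u v ^+ 2 <= enorm u ^+ 2 * enorm v ^+ 2.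
  by rewrite !enorm_sqr; exact: CauchySchwarz_sum.
have := sqr_ge0 (enorm u ^+ 2 - enorm v ^+ 2); have := sqr_ge0 (enorm u).
have := sqr_ge0 (enorm v); rewrite -(real_normK (num_real (dotv u v))) in cs.
have := normr_ge0 (dotv u v); nra.
Qed.

Lemma enorm_sqrD_le u v : enorm (u + v) ^+ 2 <= 2 * enorm u ^+ 2 + 2 * enorm v ^+ 2.
Proof.
have := normr_dotv_le u v; have := ler_norm (dotv u v); rewrite enorm_sqrD; lra.
Qed.

Lemma enorm_sum_scale_le n (e : 'I_n -> R) (w : 'I_n -> 'rV[R]_k) :
  enorm (\sum_(j < n) e j *: w j) ^+ 2
    <= (\sum_(j < n) e j ^+ 2) * \sum_(j < n) enorm (w j) ^+ 2.
Proof.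
rewrite enorm_sqr /dotv.
under [X in X <= _]eq_bigr do rewrite summxE -expr2.
under [X in _ <= _ * X]eq_bigr do rewrite enorm_sqr /dotv.
rewrite exchange_big mulr_sumr; apply: ler_sum => i _.
rewrite (eq_bigr (fun j => e j * w j ord0 i)) => [|j _]; last by rewrite mxE.
under [X in _ <= _ * X]eq_bigr do rewrite -expr2.
exact: CauchySchwarz_sum.
Qed.

Lemma enorm4_perturb_le s x b S : 0 <= s <= 1 ->
  enorm (x + (s ^+ 2 *: b + s *: S)) ^+ 4
    <= enorm x ^+ 4 + 4 * s * enorm x ^+ 2 * dotv x S
       + 6 * s ^+ 2 * (enorm x ^+ 2 + 3 * enorm b ^+ 2 + 2 * enorm S ^+ 2) ^+ 2.
Proof.
move=> /andP[s0 s1].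
set eta := s ^+ 2 *: b + s *: S.
set r := 2 * s ^+ 2 * dotv x b + enorm eta ^+ 2.
have expand : enorm (x + eta) ^+ 2 = enorm x ^+ 2 + 2 * s * dotv x S + r.
  by rewrite enorm_sqrD /eta dotvDr !dotvZr /r; ring.
have s4 : s ^+ 4 <= s ^+ 2.
  by rewrite (exprD _ 2 2) ler_piMl ?exprn_ge0 ?exprn_ile1.
have eta_le : enorm eta ^+ 2 <= 2 * s ^+ 2 * enorm b ^+ 2 + 2 * s ^+ 2 * enorm S ^+ 2.
  have := enorm_sqrD_le (s ^+ 2 *: b) (s *: S); rewrite !enorm_sqrZ -exprM.
  have := sqr_ge0 (enorm b); nra.
have r_le : `|r| <= s ^+ 2 * (enorm x ^+ 2 + 3 * enorm b ^+ 2 + 2 * enorm S ^+ 2).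
  have /ler_normlP[xb1 xb2] : `|2 * dotv x b| <= enorm x ^+ 2 + enorm b ^+ 2.
    by rewrite normrM ger0_norm //; exact: normr_dotv_le.
  have := sqr_ge0 (enorm eta); have := sqr_ge0 s.
  move=> ? ?; rewrite ler_norml /r; apply/andP; split; nra.
have pow4 (y : R) : y ^+ 4 = (y ^+ 2) ^+ 2 by rewrite -exprM.
rewrite !pow4 expand.
apply: sqr_perturb_le r_le; first lra.
- by rewrite sqr_ge0 /=; have := sqr_ge0 (enorm b); have := sqr_ge0 (enorm S); lra.
- have := normr_dotv_le x S; have := sqr_ge0 (enorm b); have := sqr_ge0 (enorm S); lra.
Qed.

End euclidean_rows.

Definition cW {R : realType} (K : R) (d : nat) : R := 1 + 3 * K ^+ 2 + 2 * d%:R * K ^+ 2.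

Section linear_growth.
Context {R : realType} {k d : nat} (K : R) (sigma : 'I_d.+1 -> 'rV[R]_k -> 'rV[R]_k).
Hypothesis sigma_growth : forall j y, enorm (sigma j y) <= K * (1 + enorm y).

Lemma enorm_sigma_sqr_le j x : enorm (sigma j x) ^+ 2 <= K ^+ 2 * (1 + enorm x) ^+ 2.
Proof.
by rewrite -exprMn; have := sigma_growth j x; have := enorm_ge0 (sigma j x); nra.
Qed.

Lemma enorm_sum_sigma_le (e : 'I_d -> R) x :
  enorm (\sum_(j < d) e j *: sigma (lift ord0 j) x) ^+ 2
    <= d%:R * K ^+ 2 * (1 + enorm x) ^+ 2 * \sum_(j < d) e j ^+ 2.
Proof.
apply: le_trans (enorm_sum_scale_le _ _) _.
have e0 : 0 <= \sum_(j < d) e j ^+ 2 by rewrite sumr_ge0 // => j _; exact: sqr_ge0.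
apply: (le_trans (ler_wpM2l e0 (ler_sum _ (fun j _ => enorm_sigma_sqr_le _ x)))).
by rewrite sumr_const card_ord -mulr_natl; nra.
Qed.

Lemma perturb_weight_sqr_le (e : 'I_d -> R) x :
  (enorm x ^+ 2 + 3 * enorm (sigma ord0 x) ^+ 2
   + 2 * enorm (\sum_(j < d) e j *: sigma (lift ord0 j) x) ^+ 2) ^+ 2
    <= 2 * cW K d ^+ 2 * (1 + enorm x) ^+ 4 * (1 + (\sum_(j < d) e j ^+ 2) ^+ 2).
Proof.
set Z := \sum_(j < d) e j ^+ 2; set a := enorm x.
set S := \sum_(j < d) e j *: _.
set B := a ^+ 2 + _ + _.
have Z0 : 0 <= Z by rewrite sumr_ge0 // => j _; exact: sqr_ge0.
have V0 : 0 <= (1 + a) ^+ 2 := sqr_ge0 _.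
have K2 : 0 <= K ^+ 2 := sqr_ge0 K.
have a0 : 0 <= a := enorm_ge0 x.
have B0 : 0 <= B.
  by rewrite /B; have := sqr_ge0 (enorm (sigma ord0 x)); have := sqr_ge0 (enorm S); nra.
have B_le : B <= cW K d * (1 + a) ^+ 2 * (1 + Z).
  have aV : a ^+ 2 <= (1 + a) ^+ 2 by rewrite ler_sqr ?nnegrE //; lra.
  have := enorm_sigma_sqr_le ord0 x; have := enorm_sum_sigma_le e x.
  have d0 : 0 <= d%:R :> R := ler0n _ _.
  have := mulr_ge0 (mulr_ge0 K2 V0) Z0; have := mulr_ge0 V0 Z0.
  have := mulr_ge0 (mulr_ge0 d0 K2) V0; rewrite /B /cW -/a -/S -/Z; nra.
have : B ^+ 2 <= (cW K d * (1 + a) ^+ 2 * (1 + Z)) ^+ 2.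
  by rewrite ler_sqr ?nnegrE //; lra.
have -> : (cW K d * (1 + a) ^+ 2 * (1 + Z)) ^+ 2
         = cW K d ^+ 2 * (1 + a) ^+ 4 * (1 + Z) ^+ 2 by ring.
have : (1 + Z) ^+ 2 <= 2 * (1 + Z ^+ 2) by have := sqr_ge0 (1 - Z); nra.
have c0 : 0 <= cW K d ^+ 2 * (1 + a) ^+ 4 by rewrite mulr_ge0 ?sqr_ge0 ?exprn_ge0 //; lra.
move=> /(ler_wpM2l c0); lra.
Qed.

Lemma W_etah_le (T : Type) (xi : 'I_d -> T -> R) h x t : 0 < h <= 1 ->
  W (x + etah sigma xi h x t)
    <= W x + \sum_(j < d) (4 * Num.sqrt h * enorm x ^+ 2
                           * dotv x (sigma (lift ord0 j) x)) * xi j t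
       + 12 * h * cW K d ^+ 2 * (1 + enorm x) ^+ 4
         * (1 + (\sum_(j < d) xi j t ^+ 2) ^+ 2).
Proof.
move=> /andP[h0 h1]; set s := Num.sqrt h.
set S := \sum_(j < d) xi j t *: sigma (lift ord0 j) x.
have hs : h = s ^+ 2 by rewrite sqr_sqrtr //; lra.
have s01 : 0 <= s <= 1 by rewrite sqrtr_ge0 /= -sqrtr1 ler_sqrt //; lra.
have dotS : dotv x S = \sum_(j < d) xi j t * dotv x (sigma (lift ord0 j) x).
  by rewrite dotv_sumr; apply: eq_bigr => j _; rewrite dotvZr.
have lin : 4 * s * enorm x ^+ 2 * dotv x S
    = \sum_(j < d) 4 * s * enorm x ^+ 2 * dotv x (sigma (lift ord0 j) x) * xi j t.
  by rewrite dotS mulr_sumr; apply: eq_bigr => j _; ring.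
have := enorm4_perturb_le x (sigma ord0 x) S s01.
have := ler_wpM2l (sqr_ge0 s) (perturb_weight_sqr_le (xi^~ t) x).
rewrite /W /etah -/s -/S lin hs; lra.
Qed.

End linear_growth.

Section integral_without_measurability.
Context {dT : measure_display} {T : measurableType dT} {R : realType}.
Variable mu : {measure set T -> \bar R}.
Local Open Scope ereal_scope.

(* The integral of a nonnegative function is a supremum over the simple
   functions below it, hence monotone without any measurability assumption. *)
Lemma ge0_le_integral_nonmeas (f g : T -> \bar R) :
  (forall t, 0 <= f t) -> (forall t, f t <= g t) ->
  \int[mu]_t f t <= \int[mu]_t g t.
Proof.
move=> f0 fg; have g0 t : 0 <= g t := le_trans (f0 t) (fg t).
rewrite !ge0_integralTE //; apply: le_ereal_sup => _ [s /= sf <-].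
by exists s => //= t; exact: le_trans (sf t) (fg t).
Qed.

(* [f] need not be measurable: this bounds [U_h g] for an arbitrary [g], whose
   composition with [eta_h] is not known to be measurable. *)
Lemma normr_Rintegral_le (f : T -> R) (G : T -> \bar R) (M : R) :
  (forall t, `|f t|%:E <= G t) -> \int[mu]_t G t <= M%:E ->
  (`|Rintegral mu setT f| <= M)%R.
Proof.
move=> fG GM.
have part_le (p : T -> \bar R) : (forall t, 0 <= p t <= `|f t|%:E) ->
    exists2 r : R, \int[mu]_t p t = r%:E & (0 <= r <= M)%R.
  move=> p0; have ple : \int[mu]_t p t <= M%:E.
    apply: le_trans GM; apply: ge0_le_integral_nonmeas => t; case/andP: (p0 t) => //.
    by move=> _ /le_trans; apply.
  have pge : 0 <= \int[mu]_t p t by apply: integral_ge0 => t _; case/andP: (p0 t).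
  have pfin : \int[mu]_t p t \is a fin_num.
    by rewrite ge0_fin_numE // (le_lt_trans ple) ?ltry.
  exists (fine (\int[mu]_t p t)); first by rewrite fineK.
  by rewrite -!lee_fin fineK // pge.
rewrite /Rintegral integralE.
have [|rp -> /andP[rp0 rpM]] := part_le (fun t => (f t)%:E)^\+.
  move=> t; rewrite funepos_ge0 funeposE /= ge_max lee_fin ler_norm /=.
  by rewrite lee_fin.
have [|rn -> /andP[rn0 rnM]] := part_le (fun t => (f t)%:E)^\-.
  move=> t; rewrite funeneg_ge0 funenegE /= ge_max lee_fin -normrN ler_norm /=.
  by rewrite lee_fin.
by rewrite -EFinB /= ler_norml; apply/andP; split; lra.
Qed.

End integral_without_measurability.

Section weighted_norm.
Context {R : realType} {k : nat}.
Implicit Types (g : 'rV[R]_k -> R) (y : 'rV[R]_k).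

Lemma W_ge1 y : 1 <= W y.
Proof. by rewrite /W lerDl exprn_ge0 // enorm_ge0. Qed.

Lemma Wnorm_ge0 g : (0 <= Wnorm g)%E.
Proof.
apply: le_trans (ereal_sup_ubound (imageT _ 0)).
by rewrite lee_fin divr_ge0 // (le_trans ler01 (W_ge1 _)).
Qed.

Lemma normr_le_Wnorm g y : (Wnorm g < +oo)%E -> `|g y| <= fine (Wnorm g) * W y.
Proof.
move=> gfin; have Wy0 : 0 < W y := lt_le_trans ltr01 (W_ge1 y).
rewrite -ler_pdivrMr // -lee_fin fineK ?ge0_fin_numE ?Wnorm_ge0 //.
exact: ereal_sup_ubound (imageT _ y).
Qed.

Lemma Wnorm_le g c : (forall y, `|g y| <= c * W y) -> (Wnorm g <= c%:E)%E.
Proof.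
move=> gc; apply: ge_ereal_sup => _ [y _ <-].
by rewrite lee_fin ler_pdivrMr // (lt_le_trans ltr01 (W_ge1 y)).
Qed.

End weighted_norm.

(* [96 = 12 * 8], from [W_etah_le] and [expr4_1D_le]. *)
Definition qW {R : realType} (K M4 : R) (d : nat) : R :=
  96 * cW K d ^+ 2 * (1 + `|M4|).

Section W_moment.
Context {dT : measure_display} {T : measurableType dT} {R : realType}.
Variables (P : probability T R) (d : nat) (xi : 'I_d -> {RV P >-> R}) (M4 : R).
Hypothesis xi_mean0 : forall i, ('E_P[xi i] = 0)%E.
Hypothesis xi_moment4 : ('E_P[(fun t => (\sum_(j < d) xi j t ^+ 2) ^+ 2)%R] = M4%:E)%E.

Let Z4 t := (\sum_(j < d) xi j t ^+ 2) ^+ 2.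

Let Z4_ge0 t : 0 <= Z4 t. Proof. exact: sqr_ge0. Qed.

Let integral_xi j : (\int[P]_t (xi j t)%:E = 0)%E.
Proof. by move: (xi_mean0 j); rewrite unlock. Qed.

Let integral_Z4 : (\int[P]_t (Z4 t)%:E = M4%:E)%E.
Proof. by move: xi_moment4; rewrite unlock. Qed.

Let integrable_Z4 : P.-integrable setT (fun t => (Z4 t)%:E).
Proof.
apply/integrableP; split.
  apply/measurable_EFinP/measurable_funX.
  by apply: measurable_sum => j; exact: measurable_funX.
under eq_integral do rewrite gee0_abs ?lee_fin //.
by rewrite integral_Z4 ltry.
Qed.

Let integrable_xi j : P.-integrable setT (fun t => (xi j t)%:E).
Proof.
apply: (le_integrable measurableT _ _ (integrableD measurableT
  (finite_measure_integrable_cst P 1 measurableT) integrable_Z4)).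
  exact/measurable_EFinP.
move=> t _; rewrite /comp /cst -EFinD !abse_EFin lee_fin.
rewrite [X in _ <= X]ger0_norm ?addr_ge0 //.
have Z_ge0 : 0 <= \sum_(l < d) xi l t ^+ 2 by rewrite sumr_ge0 // => l _; exact: sqr_ge0.
have xi_le_Z : xi j t ^+ 2 <= \sum_(l < d) xi l t ^+ 2.
  by rewrite (bigD1 j) //= lerDl sumr_ge0 // => l _; exact: sqr_ge0.
apply: le_trans (normr_le_1Dsqr_sqr _) _.
by rewrite lerD2l ler_sqr ?nnegrE ?sqr_ge0.
Qed.

Lemma integral_affine_xi (kap beta : R) (al : 'I_d -> R) :
  P.-integrable setT (fun t => (kap + \sum_(j < d) al j * xi j t + beta * Z4 t)%:E) /\
  (\int[P]_t (kap + \sum_(j < d) al j * xi j t + beta * Z4 t)%:E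
     = (kap + beta * M4)%:E)%E.
Proof.
have integrable_cst : P.-integrable setT (fun=> kap%:E).
  exact: finite_measure_integrable_cst.
have integrable_lin :
    P.-integrable setT (fun t => \sum_(j < d) (al j)%:E * (xi j t)%:E)%E.
  by apply: integrable_sum => // j _; exact: integrableZl.
have integrable_Z4Z : P.-integrable setT (fun t => beta%:E * (Z4 t)%:E)%E.
  exact: integrableZl.
have split_EFin t : (kap + \sum_(j < d) al j * xi j t + beta * Z4 t)%:E
    = (kap%:E + \sum_(j < d) (al j)%:E * (xi j t)%:E + beta%:E * (Z4 t)%:E)%E.
  by rewrite !EFinD -sumEFin EFinM; under eq_bigr do rewrite EFinM.
split.
  apply: (eq_integrable measurableT _ _ _ (integrableD measurableT
    (integrableD measurableT integrable_cst integrable_lin) integrable_Z4Z)).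
  by move=> t _; rewrite split_EFin.
under eq_integral do rewrite split_EFin.
rewrite integralD //; last exact: integrableD.
rewrite integralD // integral_cst //= probability_setT mule1 integral_sum //; last first.
  by move=> j; exact: integrableZl.
rewrite big1 ?adde0; last first.
  by move=> j _; rewrite integralZl // integral_xi mule0.
by rewrite integralZl // integral_Z4 -EFinM -EFinD.
Qed.

Lemma W_etah_dominated {k} (K : R) (sigma : 'I_d.+1 -> 'rV[R]_k -> 'rV[R]_k) :
  (forall j y, enorm (sigma j y) <= K * (1 + enorm y)) -> forall h x, 0 < h <= 1 ->
  exists B : T -> R,
    [/\ forall t, W (x + etah sigma (fun j => xi j) h x t) <= B t,
        P.-integrable setT (fun t => (B t)%:E) &
        (\int[P]_t (B t)%:E <= (expR (qW K M4 d * h) * W x)%:E)%E].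
Proof.
move=> sigma_growth h x h01; have /andP[h0 h1] := h01.
set a := enorm x; set beta := 12 * h * cW K d ^+ 2 * (1 + a) ^+ 4.
set al := fun j => 4 * Num.sqrt h * a ^+ 2 * dotv x (sigma (lift ord0 j) x).
have [integrable_B int_B] := integral_affine_xi (W x + beta) beta al.
eexists; split; [move=> t | exact: integrable_B |].
  apply: le_trans (W_etah_le sigma_growth _ x t h01) _.
  by rewrite /Z4 /beta /al /a /=; lra.
rewrite int_B lee_fin.
have W0 : 0 <= W x := le_trans ler01 (W_ge1 x).
have beta_le : beta * (1 + M4) <= qW K M4 d * h * W x.
  have c0 : 0 <= 12 * h * cW K d ^+ 2 by rewrite mulr_ge0 ?sqr_ge0 // mulr_ge0 //; lra.
  have beta0 : 0 <= beta by rewrite mulr_ge0 // exprn_ge0 // addr_ge0 // enorm_ge0.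
  have := ler_wpM2l c0 (expr4_1D_le a); rewrite -/beta -/(W x) => Wle.
  have M4_le : 1 + M4 <= 1 + `|M4| by rewrite lerD2l ler_norm.
  have := ler_wpM2l beta0 M4_le.
  have := ler_wpM2r (addr_ge0 ler01 (normr_ge0 M4)) Wle.
  rewrite /qW; lra.
have := ler_wpM2r W0 (expR_ge1Dx (qW K M4 d * h)); lra.
Qed.

End W_moment.

Lemma assumptionA_growth {R : realType} {k d m0} (K theta : R)
    (sigma : 'I_d.+1 -> 'rV[R]_k -> 'rV[R]_k) :
  assumptionA K m0 theta sigma -> forall j y, enorm (sigma j y) <= K * (1 + enorm y).
Proof. by case=> _ _ _ coeffA j; case: (coeffA j). Qed.

Lemma qW_gt0 {R : realType} (K M4 : R) d : 0 < qW K M4 d.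
Proof.
have c1 : 1 <= cW K d by rewrite /cW -addrA lerDl addr_ge0 // mulr_ge0 ?sqr_ge0.
by rewrite /qW !mulr_gt0 // (lt_le_trans ltr01 c1).
Qed.

Theorem lemma15 (R : realType) (K : R) (d : nat) (M4 : R) :
  exists qW : R, 0 < qW /\
  forall (k m0 : nat) (theta : R) (sigma : 'I_d.+1 -> 'rV[R]_k -> 'rV[R]_k)
         (dT : measure_display) (T : measurableType dT) (P : probability T R)
         (xi : 'I_d -> {RV P >-> R}),
    assumptionA K m0 theta sigma ->
    (forall i, ('E_P[xi i] = 0)%E) ->
    (forall i j, ('E_P[(fun t => xi i t * xi j t)%R] = ((i == j)%:R)%:E)%E) ->
    (forall i j l, ('E_P[(fun t => xi i t * xi j t * xi l t)%R] = 0)%E) ->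
    ('E_P[(fun t => (\sum_(j < d) xi j t ^+ 2) ^+ 2)%R] = M4%:E)%E ->
    (forall h x, 0 < h <= 1 ->
       ('E_P[(fun t => W (x + etah sigma (fun j => xi j) h x t))%R]
          <= (expR (qW * h) * W x)%:E)%E) /\
    (forall h (g : 'rV[R]_k -> R), 0 < h <= 1 -> continuous g ->
       (Wnorm g < +oo)%E ->
       (Wnorm (U P sigma (fun j => xi j) h g) <= (expR (qW * h))%:E * Wnorm g)%E).
Proof.
exists (qW K M4 d); split; first exact: qW_gt0.
move=> k m0 theta sigma dT T P xi /assumptionA_growth growth mean0 _ _ moment4.
have dominated := W_etah_dominated mean0 moment4 growth.
split=> [h x h01 | h g h01 _ g_fin].
  have [B [W_le_B _ int_B]] := dominated h x h01.
  rewrite unlock; apply: le_trans int_B; apply: ge0_le_integral_nonmeas => t.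
    by rewrite lee_fin (le_trans ler01 (W_ge1 _)).
  by rewrite lee_fin.
set c := fine (Wnorm g).
have c0 : 0 <= c by rewrite fine_ge0 // Wnorm_ge0.
have -> : Wnorm g = c%:E by rewrite fineK // ge0_fin_numE // Wnorm_ge0.
rewrite -EFinM; apply: Wnorm_le => x.
have [B [W_le_B integrable_B int_B]] := dominated h x h01.
apply: (normr_Rintegral_le (G := fun t => (c * B t)%:E)).
  move=> t; rewrite lee_fin (le_trans (normr_le_Wnorm _ g_fin)) //.
  by rewrite ler_wpM2l.
under eq_integral do rewrite EFinM.
by rewrite integralZl // mulrAC mulrC EFinM lee_wpmul2l ?lee_fin.
Qed.
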